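(* Let $N_1,N_2,N_3,L_1,L_2,L_3\ge1$ be dyadic, let $A\ge2^{25}$ be dyadic and let $j_1,j_2\in\{0,\dots,A-1\}$ with $|j_1-j_2|\le32$. Let $\lambda_\iota=(\tau_\iota,\xi_\iota,\eta_\iota)\in G_{N_\iota,L_\iota}\cap\tilde{\mathcal D}^A_{j_\iota}$ for $\iota=1,2$, with $\lambda_1+\lambda_2\in G_{N_3,L_3}$, and set $(\xi_3,\eta_3)=-(\xi_1+\xi_2,\eta_1+\eta_2)$. Assume $((\xi_1,\eta_1),(\xi_2,\eta_2))\notin\mathcal I_1$, and assume Case 1.1: $N_1\sim N_2\gg N_3$ and $|\xi_1|\sim|\eta_1|\sim|\xi_2|\sim|\eta_2|\sim N_1\gg|\xi_3|\sim|\eta_3|$. If $\max_{1\le\iota\le3}L_\iota\lesssim A^{-1}N_1^3$, then $N_3\lesssim A^{-1}N_1$.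
   Context: $G_{N,L}=\{(\tau,\xi,\eta):N/2<|(\xi,\eta)|<2N,\ L/2<|\tau-\xi^3-\eta^3|<2L\}$. Angular sectors: for dyadic $A$ and $j\in\{0,\dots,A-1\}$, $\Theta^A_j=[\frac{\pi}{A}(j-2),\frac\pi A(j+2)]\cup[-\pi+\frac\pi A(j-2),-\pi+\frac\pi A(j+2)]$, $\mathcal D^A_j=\{r(\cos\theta,\sin\theta):r\ge0,\ \theta\in\Theta^A_j\}\subset\mathbb{R}^2$, $\tilde{\mathcal D}^A_j=\mathbb{R}\times\mathcal D^A_j$. $\mathcal I_1=\mathcal D^{2^{11}}_{3\cdot2^9}\times\mathcal D^{2^{11}}_{3\cdot 2^9}\subset\mathbb{R}^2\times\mathbb{R}^2$, i.e. both vectors lie within angle $\pi/2^{10}$ of the line $\xi+\eta=0$. $A\lesssim B$ means $A\le CB$ with an absolute constant; $A\gg B$ means $A\ge CB$ for a sufficiently large absolute constant; $\sim$ means comparable with fixed absolute constants. *)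

From Stdlib Require Import Reals Lra.
Open Scope R_scope.

Definition dyadic (x : R) : Prop := exists k : nat, x = 2 ^ k.

Definition inTheta (A j th : R) : Prop :=
  (PI / A * (j - 2) <= th <= PI / A * (j + 2)) \/
  (- PI + PI / A * (j - 2) <= th <= - PI + PI / A * (j + 2)).

Definition inD (A j x y : R) : Prop :=
  exists r th, 0 <= r /\ inTheta A j th /\ x = r * cos th /\ y = r * sin th.

Definition inDt (A j tau xi eta : R) : Prop := inD A j xi eta.

Definition inG (N L tau xi eta : R) : Prop :=
  N / 2 < sqrt (xi ^ 2 + eta ^ 2) < 2 * N /\
  L / 2 < Rabs (tau - xi ^ 3 - eta ^ 3) < 2 * L.

Definition inI1 (x1 y1 x2 y2 : R) : Prop :=
  inD (2 ^ 11) (3 * 2 ^ 9) x1 y1 /\ inD (2 ^ 11) (3 * 2 ^ 9) x2 y2.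

Definition sim (c a b : R) : Prop := a <= c * b /\ b <= c * a.

(* Since (a+b)^3 - a^3 - b^3 = 3ab(a+b), the three modulations add up to
   3 (xi1 xi2 xi3 + eta1 eta2 eta3), so this resonance is O(max L) = O(N1^3 / A).
   Write one frequency lying off the antidiagonal sector as r (cos th, sin th) and split
   (xi3, eta3) into components d along and p across (cos th, sin th).  Then the resonance
   is r^2 (d (cos^3 th + sin^3 th) + p cos th sin th (sin th - cos th)) up to a term of
   size r |(xi3, eta3)|^2.  Off the antidiagonal |cos^3 th + sin^3 th| is bounded below,
   the other frequency lies in an adjacent sector of width ~ 1/A so |p| = O(N1 / A), and
   N3 << N1 makes the quadratic term negligible: N1^2 N3 = O(N1^3 / A).  Of the Case 1.1
   assumptions only N1 ~ N2 and N3 << N1 are used. *)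

From Stdlib Require Import Reals Lra Lia Classical.
Open Scope R_scope.

Lemma Rabs_sin_le x : Rabs (sin x) <= Rabs x.
Proof.
  assert (Hpos : forall y, 0 <= y -> Rabs (sin y) <= y).
  { intros y Hy. destruct (Req_dec y 0) as [-> | Hy0].
    - rewrite sin_0, Rabs_R0; lra.
    - pose proof (sin_lt_x y ltac:(lra)). pose proof (SIN_bound y).
      destruct (Rle_lt_dec y 1).
      + assert (0 <= sin y) by (apply sin_ge_0; pose proof PI2_3_2; lra).
        rewrite Rabs_pos_eq; lra.
      + apply Rabs_le; lra. }
  destruct (Rle_lt_dec 0 x).
  - rewrite (Rabs_pos_eq x) by lra. auto.
  - rewrite <- (Ropp_involutive x), sin_neg, Rabs_Ropp, Rabs_Ropp.
    rewrite (Rabs_pos_eq (- x)) by lra. apply Hpos; lra.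
Qed.

Lemma sin_ge_3_2048 y : PI / 1024 <= y <= PI - PI / 1024 -> 3 / 2048 <= sin y.
Proof.
  intros Hy. pose proof PI_4. pose proof PI2_3_2.
  assert (Hsmall : 3 / 2048 <= sin (PI / 1024)).
  { destruct (sin_bound (PI / 1024) 0) as [Hs _]; try lra.
    unfold sin_approx, sin_term in Hs. simpl in Hs. nra. }
  destruct (Rle_lt_dec y (PI / 2)).
  - eapply Rle_trans; [exact Hsmall|]. apply sin_incr_1; lra.
  - rewrite <- sin_PI_x. eapply Rle_trans; [exact Hsmall|]. apply sin_incr_1; lra.
Qed.

Lemma Rabs_sin_ge_3_2048 x :
  - PI + PI / 1024 <= x <= 2 * PI - PI / 1024 ->
  ~ (- (PI / 1024) <= x <= PI / 1024) -> ~ (PI - PI / 1024 <= x <= PI + PI / 1024) ->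
  3 / 2048 <= Rabs (sin x).
Proof.
  intros Hx H0 HPI. pose proof PI_RGT_0.
  destruct (Rle_lt_dec x (PI / 1024)) as [Hle | Hgt].
  - rewrite <- (Ropp_involutive x), sin_neg, Rabs_Ropp.
    pose proof (sin_ge_3_2048 (- x)). rewrite Rabs_pos_eq; lra.
  - destruct (Rle_lt_dec x (PI - PI / 1024)).
    + pose proof (sin_ge_3_2048 x). rewrite Rabs_pos_eq; lra.
    + replace x with ((x - PI) + PI) by ring. rewrite neg_sin, Rabs_Ropp.
      pose proof (sin_ge_3_2048 (x - PI)). rewrite Rabs_pos_eq; lra.
Qed.

Lemma cos_add_sin th : cos th + sin th = sqrt 2 * sin (th + PI / 4).
Proof.
  rewrite sin_plus, sin_PI4, cos_PI4.
  assert (0 < sqrt 2) by (apply sqrt_lt_R0; lra).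
  field. lra.
Qed.

Lemma inTheta_bounds A j th :
  64 <= A -> 0 <= j < A -> inTheta A j th -> - PI - PI / 32 <= th <= PI + PI / 32.
Proof.
  intros HA Hj Ht. pose proof PI_RGT_0.
  set (w := PI / A) in *.
  assert (Hw : 0 < w) by (unfold w; apply Rdiv_lt_0_compat; lra).
  assert (Hw64 : w * 64 <= PI).
  { unfold w. apply Rmult_le_reg_r with A; [lra|]. field_simplify; nra. }
  assert (Hwj : w * j <= PI).
  { unfold w. apply Rmult_le_reg_r with A; [lra|]. field_simplify; [nra|lra]. }
  unfold inTheta in Ht. fold w in Ht. destruct Ht; nra.
Qed.

Lemma Rabs_cos_add_sin_ge th :
  - PI - PI / 32 <= th <= PI + PI / 32 -> ~ inTheta (2 ^ 11) (3 * 2 ^ 9) th ->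
  3 / 2048 <= Rabs (cos th + sin th).
Proof.
  intros Hth Hn. pose proof PI_RGT_0.
  assert (Hs2 : 1 <= sqrt 2) by (rewrite <- sqrt_1; apply sqrt_le_1_alt; lra).
  rewrite cos_add_sin, Rabs_mult, (Rabs_pos_eq (sqrt 2)) by lra.
  assert (3 / 2048 <= Rabs (sin (th + PI / 4))).
  { unfold inTheta in Hn.
    apply Rabs_sin_ge_3_2048; [lra | intro; apply Hn; right; lra
                                    | intro; apply Hn; left; lra]. }
  pose proof (Rabs_pos (sin (th + PI / 4))). nra.
Qed.

Lemma Rabs_cos3_add_sin3_ge th :
  Rabs (cos th + sin th) / 2 <= Rabs (cos th ^ 3 + sin th ^ 3).
Proof.
  pose proof (sin2_cos2 th) as Hcs. unfold Rsqr in Hcs.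
  set (c := cos th) in *. set (s := sin th) in *.
  replace (c ^ 3 + s ^ 3) with ((c + s) * (1 - c * s)) by (rewrite <- Hcs; ring).
  assert (1 / 2 <= 1 - c * s) by (pose proof (pow2_ge_0 (c - s)); nra).
  rewrite Rabs_mult, (Rabs_pos_eq (1 - c * s)) by lra.
  pose proof (Rabs_pos (c + s)). nra.
Qed.

Lemma Rabs_sin_sub_inTheta A ja jb tha thb :
  0 < A -> Rabs (ja - jb) <= 32 -> inTheta A ja tha -> inTheta A jb thb ->
  Rabs (sin (thb - tha)) <= 36 * (PI / A).
Proof.
  intros HA Hj Ha Hb. set (w := PI / A) in *.
  assert (Hw : 0 < w) by (unfold w; apply Rdiv_lt_0_compat; [exact PI_RGT_0 | lra]).
  assert (Hjw : - (32 * w) <= w * (jb - ja) <= 32 * w).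
  { unfold Rabs in Hj. destruct (Rcase_abs (ja - jb)); split; nra. }
  unfold inTheta in Ha, Hb. fold w in Ha, Hb.
  destruct Ha as [Ha | Ha]; destruct Hb as [Hb | Hb].
  - eapply Rle_trans; [apply Rabs_sin_le|]. apply Rabs_le; nra.
  - rewrite <- (Rabs_Ropp (sin _)), <- neg_sin.
    eapply Rle_trans; [apply Rabs_sin_le|]. apply Rabs_le; nra.
  - replace (thb - tha) with ((thb - tha - PI) + PI) by ring.
    rewrite neg_sin, Rabs_Ropp.
    eapply Rle_trans; [apply Rabs_sin_le|]. apply Rabs_le; nra.
  - eapply Rle_trans; [apply Rabs_sin_le|]. apply Rabs_le; nra.
Qed.

Lemma Rabs_cos3_add_sin3_off_antidiagonal A j th :
  64 <= A -> 0 <= j < A -> inTheta A j th -> ~ inTheta (2 ^ 11) (3 * 2 ^ 9) th ->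
  3 / 4096 <= Rabs (cos th ^ 3 + sin th ^ 3).
Proof.
  intros HA Hj Ht Hoff.
  pose proof (Rabs_cos3_add_sin3_ge th).
  pose proof (Rabs_cos_add_sin_ge th (inTheta_bounds A j th HA Hj Ht) Hoff). lra.
Qed.

Lemma Rabs_cross_inTheta A ja jb ra tha rb thb :
  0 < A -> Rabs (ja - jb) <= 32 -> inTheta A ja tha -> inTheta A jb thb -> 0 <= rb ->
  Rabs (cos tha * (- (ra * sin tha + rb * sin thb))
        - sin tha * (- (ra * cos tha + rb * cos thb)))
  <= rb * (36 * (PI / A)).
Proof.
  intros HA Hj Ha Hb Hrb.
  replace (cos tha * (- (ra * sin tha + rb * sin thb))
           - sin tha * (- (ra * cos tha + rb * cos thb)))
    with (- (rb * sin (thb - tha))) by (rewrite sin_minus; ring).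
  rewrite Rabs_Ropp, Rabs_mult, (Rabs_pos_eq rb) by lra.
  apply Rmult_le_compat_l; [lra|].
  exact (Rabs_sin_sub_inTheta A ja jb tha thb HA Hj Ha Hb).
Qed.

(* (X, Y) is the third frequency, r (c, s) the first one, and the second one is
   minus their sum. *)
Lemma resonance_lower_bound k r c s X Y :
  c ^ 2 + s ^ 2 = 1 -> 0 <= r -> 0 <= k <= Rabs (c ^ 3 + s ^ 3) ->
  r ^ 2 * (k * sqrt (X ^ 2 + Y ^ 2) - (k + 2) * Rabs (c * Y - s * X))
    - r * (X ^ 2 + Y ^ 2)
  <= Rabs (r * c * (- X - r * c) * X + r * s * (- Y - r * s) * Y).
Proof.
  intros Hcs Hr Hk.
  set (d := c * X + s * Y). set (p := c * Y - s * X).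
  set (t := sqrt (X ^ 2 + Y ^ 2)).
  assert (Htt : t * t = X ^ 2 + Y ^ 2) by (apply sqrt_sqrt; nra).
  assert (Hc1 : - 1 <= c <= 1) by (split; nra).
  assert (Hs1 : - 1 <= s <= 1) by (split; nra).
  assert (Hc : Rabs c <= 1) by (apply Rabs_le; lra).
  assert (Hs : Rabs s <= 1) by (apply Rabs_le; lra).
  assert (Hres : r * c * (- X - r * c) * X + r * s * (- Y - r * s) * Y
                 = - (r ^ 2 * (d * (c ^ 3 + s ^ 3) + p * (c * s * (s - c))))
                   - r * (c * X ^ 2 + s * Y ^ 2)).
  { transitivity (- (r ^ 2 * ((c ^ 2 + s ^ 2) * (c ^ 2 * X + s ^ 2 * Y)))
                  - r * (c * X ^ 2 + s * Y ^ 2)); [rewrite Hcs; ring | unfold d, p; ring]. }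
  assert (Hd : t - Rabs p <= Rabs d).
  { assert (Hdp : d * d + p * p = t * t)
      by (rewrite Htt; unfold d, p; rewrite <- (Rmult_1_l (X ^ 2 + Y ^ 2)), <- Hcs; ring).
    pose proof (Rabs_pos p). pose proof (Rabs_pos d).
    pose proof (sqrt_pos (X ^ 2 + Y ^ 2)).
    assert (Rabs d * Rabs d = d * d) by (rewrite <- Rabs_mult; apply Rabs_pos_eq; nra).
    assert (Rabs p * Rabs p = p * p) by (rewrite <- Rabs_mult; apply Rabs_pos_eq; nra).
    nra. }
  assert (Hcross : Rabs (c * s * (s - c)) <= 2).
  { rewrite !Rabs_mult.
    assert (Rabs (s - c) <= 2) by (apply Rabs_le; lra).
    pose proof (Rabs_pos c). pose proof (Rabs_pos s). pose proof (Rabs_pos (s - c)).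
    assert (Rabs c * Rabs s <= 1) by nra. nra. }
  assert (Htail : Rabs (r * (c * X ^ 2 + s * Y ^ 2)) <= r * (X ^ 2 + Y ^ 2)).
  { rewrite Rabs_mult, (Rabs_pos_eq r) by lra. apply Rmult_le_compat_l; [lra|].
    eapply Rle_trans; [apply Rabs_triang|]. rewrite !Rabs_mult.
    rewrite (Rabs_pos_eq (X ^ 2)), (Rabs_pos_eq (Y ^ 2)) by nra. nra. }
  assert (Hmain : r ^ 2 * (k * t - (k + 2) * Rabs p)
                  <= Rabs (r ^ 2 * (d * (c ^ 3 + s ^ 3) + p * (c * s * (s - c))))).
  { rewrite Rabs_mult, (Rabs_pos_eq (r ^ 2)) by nra.
    apply Rmult_le_compat_l; [nra|].
    pose proof (Rabs_triang_inv (d * (c ^ 3 + s ^ 3)) (- (p * (c * s * (s - c))))) as T.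
    replace (d * (c ^ 3 + s ^ 3) - - (p * (c * s * (s - c))))
      with (d * (c ^ 3 + s ^ 3) + p * (c * s * (s - c))) in T by ring.
    rewrite Rabs_Ropp, (Rabs_mult d), (Rabs_mult p) in T.
    pose proof (Rabs_pos d). pose proof (Rabs_pos p). nra. }
  rewrite Hres.
  pose proof (Rabs_triang_inv (- (r ^ 2 * (d * (c ^ 3 + s ^ 3) + p * (c * s * (s - c)))))
                              (r * (c * X ^ 2 + s * Y ^ 2))).
  rewrite Rabs_Ropp in *. lra.
Qed.

Lemma le_of_mul_sq_le a r N X B :
  0 < N -> N <= a * r -> 0 <= B -> r ^ 2 * X <= B * N ^ 2 -> X <= a ^ 2 * B.
Proof.
  intros HN Hr HB HX.
  destruct (Rle_lt_dec X 0) as [HX0 | HX0]; [nra|].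
  assert (N ^ 2 * X <= a ^ 2 * B * N ^ 2).
  { assert (N ^ 2 <= (a * r) ^ 2) by (apply pow_incr; lra). nra. }
  apply Rmult_le_reg_l with (N ^ 2); nra.
Qed.

Lemma resonance_lt_max_modulation N1 N2 N3 L1 L2 L3 B tau1 xi1 eta1 tau2 xi2 eta2 :
  inG N1 L1 tau1 xi1 eta1 -> inG N2 L2 tau2 xi2 eta2 ->
  inG N3 L3 (tau1 + tau2) (xi1 + xi2) (eta1 + eta2) ->
  Rmax L1 (Rmax L2 L3) <= B ->
  Rabs (xi1 * xi2 * (- (xi1 + xi2)) + eta1 * eta2 * (- (eta1 + eta2))) < 2 * B.
Proof.
  intros [_ [_ h1]] [_ [_ h2]] [_ [_ h3]] HB.
  pose proof (Rmax_l L1 (Rmax L2 L3)). pose proof (Rmax_r L1 (Rmax L2 L3)).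
  pose proof (Rmax_l L2 L3). pose proof (Rmax_r L2 L3).
  set (m1 := tau1 - xi1 ^ 3 - eta1 ^ 3) in *.
  set (m2 := tau2 - xi2 ^ 3 - eta2 ^ 3) in *.
  set (m3 := tau1 + tau2 - (xi1 + xi2) ^ 3 - (eta1 + eta2) ^ 3) in *.
  replace (xi1 * xi2 * (- (xi1 + xi2)) + eta1 * eta2 * (- (eta1 + eta2)))
    with ((m3 - m1 - m2) / 3) by (unfold m1, m2, m3; field).
  unfold Rdiv. rewrite Rabs_mult, (Rabs_pos_eq (/ 3)) by lra.
  pose proof (Rabs_triang (m3 - m1) (- m2)). pose proof (Rabs_triang m3 (- m1)).
  rewrite Rabs_Ropp in *. unfold Rminus in *. lra.
Qed.

Lemma inG_polar_radius N L tau r th :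
  0 <= r -> inG N L tau (r * cos th) (r * sin th) -> N / 2 < r < 2 * N.
Proof.
  intros Hr [HN _].
  replace ((r * cos th) ^ 2 + (r * sin th) ^ 2) with (r ^ 2) in HN.
  - rewrite sqrt_pow2 in HN; lra.
  - pose proof (sin2_cos2 th) as H. unfold Rsqr in H.
    rewrite <- (Rmult_1_r (r ^ 2)), <- H. ring.
Qed.

Lemma dyadic_ge1 N : dyadic N -> 1 <= N.
Proof. intros [k ->]. induction k; simpl; lra. Qed.

(* 3/4096 is the lower bound for |cos^3 + sin^3| off the antidiagonal; the factor
   8 c (4096/3) in front of N3 makes the term ra |(xi3, eta3)|^2 at most half the main one. *)
Lemma N3_le_off_antidiagonal c C A N1 N3 ja jb ra tha rb thb :
  1 <= c -> 0 < C -> 64 <= A -> 0 <= ja < A -> Rabs (ja - jb) <= 32 ->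
  inTheta A ja tha -> inTheta A jb thb -> ~ inTheta (2 ^ 11) (3 * 2 ^ 9) tha ->
  0 <= ra -> 0 <= rb -> N1 <= 2 * c * ra -> rb <= 2 * c * N1 ->
  0 < N3 -> 8 * c * 4096 / 3 * N3 <= N1 ->
  N3 / 2 < sqrt ((ra * cos tha + rb * cos thb) ^ 2 + (ra * sin tha + rb * sin thb) ^ 2)
    < 2 * N3 ->
  Rabs (ra * cos tha * (rb * cos thb) * (- (ra * cos tha + rb * cos thb))
        + ra * sin tha * (rb * sin thb) * (- (ra * sin tha + rb * sin thb)))
    < 2 * (C * / A * N1 ^ 3) ->
  N3 <= 16384 / 3 * (8 * c ^ 2 * C + 864 * c) * / A * N1.
Proof.
  intros Hc HC HA Hja Hj Ha Hb Hoff Hra Hrb HN1 HrbN1 HN3 HK Ht HQ.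
  pose proof PI_RGT_0. pose proof PI_4.
  assert (HIA : 0 < / A) by (apply Rinv_0_lt_compat; lra).
  assert (HN1pos : 0 < N1) by nra.
  set (X := - (ra * cos tha + rb * cos thb)). set (Y := - (ra * sin tha + rb * sin thb)).
  set (t := sqrt (X ^ 2 + Y ^ 2)). fold X Y in HQ.
  replace ((ra * cos tha + rb * cos thb) ^ 2 + (ra * sin tha + rb * sin thb) ^ 2)
    with (X ^ 2 + Y ^ 2) in Ht by (unfold X, Y; ring). fold t in Ht.
  pose proof (Rabs_cos3_add_sin3_off_antidiagonal A ja tha HA Hja Ha Hoff) as Hcube.
  assert (Hcross : Rabs (cos tha * Y - sin tha * X) <= 288 * c * N1 * / A).
  { pose proof (Rabs_cross_inTheta A ja jb ra tha rb thb ltac:(lra) Hj Ha Hb Hrb) as Hp.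
    fold X Y in Hp.
    assert (rb * (36 * (PI / A)) <= rb * (144 * / A))
      by (apply Rmult_le_compat_l; [lra | unfold Rdiv; nra]).
    assert (rb * (144 * / A) <= 2 * c * N1 * (144 * / A))
      by (apply Rmult_le_compat_r; lra).
    lra. }
  assert (Hres : ra ^ 2 * (3 / 4096 * t - (3 / 4096 + 2) * Rabs (cos tha * Y - sin tha * X))
                 - ra * (t * t) <= 2 * (C * / A * N1 ^ 3)).
  { pose proof (resonance_lower_bound (3 / 4096) ra (cos tha) (sin tha) X Y) as Hlower.
    replace (- X - ra * cos tha) with (rb * cos thb) in Hlower by (unfold X; ring).
    replace (- Y - ra * sin tha) with (rb * sin thb) in Hlower by (unfold Y; ring).
    rewrite <- (sqrt_sqrt (X ^ 2 + Y ^ 2)) in Hlower at 2 by nra.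
    fold t in Hlower.
    pose proof (sin2_cos2 tha). unfold Rsqr in *.
    pose proof (Hlower ltac:(nra) Hra ltac:(lra)). lra. }
  assert (Ht_small : 0 <= t <= 3 / 4096 * ra / 2).
  { split; [apply sqrt_pos|].
    assert (8 * 4096 / 3 * N3 <= 2 * ra) by (apply Rmult_le_reg_l with c; lra).
    lra. }
  assert (Hmain : ra ^ 2 * (3 / 4096 * t / 2 - 3 * (288 * c * N1 * / A))
                  <= 2 * C * / A * N1 * N1 ^ 2).
  { assert (ra * (t * t) <= ra ^ 2 * (3 / 4096 * t / 2)).
    { assert (t * t <= t * (3 / 4096 * ra / 2)) by (apply Rmult_le_compat_l; lra).
      nra. }
    assert (ra ^ 2 * ((3 / 4096 + 2) * Rabs (cos tha * Y - sin tha * X))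
            <= ra ^ 2 * (3 * (288 * c * N1 * / A))).
    { apply Rmult_le_compat_l; [nra|].
      pose proof (Rabs_pos (cos tha * Y - sin tha * X)). lra. }
    nra. }
  assert (HB : 0 <= 2 * C * / A * N1) by (repeat apply Rmult_le_pos; lra).
  pose proof (le_of_mul_sq_le (2 * c) ra N1 _ _ HN1pos HN1 HB Hmain).
  lra.
Qed.

Theorem lemma6p1 :
  forall c : R, 1 <= c ->
  exists K : R, 0 < K /\
  forall C : R, 0 < C ->
  exists C' : R, 0 < C' /\
  forall (N1 N2 N3 L1 L2 L3 A : R) (a j1 j2 : nat)
         (tau1 xi1 eta1 tau2 xi2 eta2 xi3 eta3 : R),
    dyadic N1 -> dyadic N2 -> dyadic N3 ->
    dyadic L1 -> dyadic L2 -> dyadic L3 ->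
    A = 2 ^ a -> (25 <= a)%nat ->
    INR j1 < A -> INR j2 < A ->
    Rabs (INR j1 - INR j2) <= 32 ->
    inG N1 L1 tau1 xi1 eta1 -> inDt A (INR j1) tau1 xi1 eta1 ->
    inG N2 L2 tau2 xi2 eta2 -> inDt A (INR j2) tau2 xi2 eta2 ->
    inG N3 L3 (tau1 + tau2) (xi1 + xi2) (eta1 + eta2) ->
    xi3 = - (xi1 + xi2) -> eta3 = - (eta1 + eta2) ->
    ~ inI1 xi1 eta1 xi2 eta2 ->
    (* Case 1.1 *)
    sim c N1 N2 -> N1 >= K * N3 -> N2 >= K * N3 ->
    sim c (Rabs xi1) N1 -> sim c (Rabs eta1) N1 ->
    sim c (Rabs xi2) N1 -> sim c (Rabs eta2) N1 ->
    N1 >= K * Rabs xi3 -> N1 >= K * Rabs eta3 ->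
    sim c (Rabs xi3) (Rabs eta3) ->
    Rmax L1 (Rmax L2 L3) <= C * (/ A) * N1 ^ 3 ->
    N3 <= C' * (/ A) * N1.
Proof.
  intros c Hc. exists (8 * c * 4096 / 3). split; [lra|].
  intros C HC. exists (16384 / 3 * (8 * c ^ 2 * C + 864 * c)). split; [nra|].
  intros N1 N2 N3 L1 L2 L3 A a j1 j2 tau1 xi1 eta1 tau2 xi2 eta2 xi3 eta3
    dN1 dN2 dN3 _ _ _ HA Ha Hj1 Hj2 Hj G1 [r1 [th1 [Hr1 [T1 [-> ->]]]]]
    G2 [r2 [th2 [Hr2 [T2 [-> ->]]]]] G3 _ _ HnI [HN12 HN21] HK _ _ _ _ _ _ _ _ HL.
  apply dyadic_ge1 in dN1, dN2, dN3.
  assert (HA64 : 64 <= A)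
    by (rewrite HA; replace 64 with (2 ^ 6) by ring; apply Rle_pow; [lra | lia]).
  pose proof (pos_INR j1). pose proof (pos_INR j2).
  pose proof (resonance_lt_max_modulation _ _ _ _ _ _ _ _ _ _ _ _ _ G1 G2 G3 HL) as HQ.
  pose proof (inG_polar_radius _ _ _ _ _ Hr1 G1).
  pose proof (inG_polar_radius _ _ _ _ _ Hr2 G2).
  assert (N1 <= 2 * c * r1 /\ r1 <= 2 * c * N1) by (split; nra).
  assert (N1 <= 2 * c * r2 /\ r2 <= 2 * c * N1) by (split; nra).
  destruct G3 as [HN3 _].
  destruct (classic (inTheta (2 ^ 11) (3 * 2 ^ 9) th1)) as [On1 | Off1].
  - assert (Off2 : ~ inTheta (2 ^ 11) (3 * 2 ^ 9) th2)
      by (intro; apply HnI; split; [exists r1, th1 | exists r2, th2]; auto).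
    apply (N3_le_off_antidiagonal c C A N1 N3 (INR j2) (INR j1) r2 th2 r1 th1);
      auto; try lra.
    + rewrite Rabs_minus_sym. lra.
    + rewrite (Rplus_comm (r2 * cos th2)), (Rplus_comm (r2 * sin th2)). lra.
    + rewrite (Rplus_comm (r2 * cos th2)), (Rplus_comm (r2 * sin th2)).
      replace (r2 * cos th2 * (r1 * cos th1)) with (r1 * cos th1 * (r2 * cos th2)) by ring.
      replace (r2 * sin th2 * (r1 * sin th1)) with (r1 * sin th1 * (r2 * sin th2)) by ring.
      lra.
  - apply (N3_le_off_antidiagonal c C A N1 N3 (INR j1) (INR j2) r1 th1 r2 th2); auto; lra.
Qed.
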